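(* Let $L$ be a cell complexity function, i.e. a function $L(y,z)$ of two positive integer arguments with $L(y,z)>0$ whenever $z>0$, monotonically increasing in $y$ and in $z$. Consider a family, indexed by the working-zone size $N\to\infty$, of pairs $(\mathcal{A}_1,\mathcal{A}_2)$ where $\mathcal{A}_1$ is a 1-layered FDCA and $\mathcal{A}_2$ is a 2-layered FDCA, both with working zone of size $N$ and both recognizing the same nontrivial class $D$ of input configurations. Let $P_1=|D|$; let $P_2$ be the cardinality of the class of local configurations of layer $1$ recognized by the distinguished layer-$2$ cell of $\mathcal{A}_2$; let $p$ be the cardinality of the class of local configurations of layer $0$ recognized by a layer-$1$ cell of $\mathcal{A}_2$; let $n=|N_1|$ be the size of the basic neighborhood of layer $1$ of $\mathcal{A}_2$; and assume $P_1,P_2,p>0$. The sequential time complexities are $\lambda(\mathcal{A}_1)=L(N,P_1)$ and $\lambda(\mathcal{A}_2)=N\cdot L(n,p)+L(N,P_2)$. Then $\mathcal{A}_2$ achieves speedup over $\mathcal{A}_1$, i.e. $\lambda(\mathcal{A}_2)/\lambda(\mathcal{A}_1)\to 0$ as $N\to\infty$, if and only if both of the following hold as $N\to\infty$: (C1) $\dfrac{L(N,P_2)}{L(N,P_1)}\to 0$, and (C2) $\dfrac{N\cdot L(n,p)}{L(N,P_1)}\to 0$.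
   Context: A dynamic cellular automaton (DCA) of dimension $d$ is a sequence of layers $\sigma_i=(d,k_i,N_i,f_i)$, $i=0,1,\dots$, on the grid of cells $C=\mathbb{Z}^d$; layer $i$ has alphabet $\Sigma_i=\{0,\dots,k_i-1\}$, a basic neighborhood $N_i\subseteq\mathbb{Z}^d$ (a box $\prod_j[-r_{i,j},r_{i,j}]$) and a local map $f_i:\Sigma_{i-1}^{N_i}\to\Sigma_i$ (not defined for layer 0). A configuration of layer $i$ is a map $X_i:C\to\Sigma_i$; the local configuration at $c$ is $x_{i-1,c}(z)=X_{i-1}(c+z)$ for $z\in N_i$, and $X_i(c)=f_i(x_{i-1,c})$. A finite DCA (FDCA) has in addition a finite working zone $W\subset C$, with fixed boundary conditions (cells outside $W$ are in a special state). Here $d=2$, neighborhoods are squares $[-r_i,r_i]^2$, $W=[w]^2$, and all alphabets are $\{0,1\}$. An FDCA recognizes a class $D$ of input (layer-0) configurations by cell $c$ of layer $i$ if there is a state $k$ with $X_i(c)=k$ iff $X_0\in D$; a cell $c$ of layer $i$ recognizes a class $E$ of local configurations of layer $i-1$ if there is a state $k$ with $f_i(x_{i-1,c})=k$ iff $x_{i-1,c}\in E$. A 1-layered (resp. 2-layered) FDCA is one having a cell $c\in W$ with $c+N_1=W$ (resp. $c+N_2=W$), recognition being done by that top-layer cell, whose basic neighborhood therefore has size $N=|W|$. The cell complexity $L(n,p)$ of a cell is a function of the size $n$ of its basic neighborhood and the cardinality $p$ of the class of local configurations it recognizes (those mapped to $1$). *)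

From HB Require Import structures.
From mathcomp Require Import all_boot all_order all_algebra.
From mathcomp Require Import all_classical all_reals all_analysis.
Set Implicit Arguments. Unset Strict Implicit. Unset Printing Implicit Defensive.
Import Order.TTheory GRing.Theory Num.Theory.

(* Square boxes of side (2m+1), indexed by 'I_(2m+1) x 'I_(2m+1).
   - the working zone W = [w]^2 with w = 2m+1 (cells 0..w-1 in each axis);
   - the basic neighborhood [-r,r]^2 is indexed by 'I_(2r+1)^2, index i
     standing for the offset i - r. *)
Definition box (m : nat) : finType := ('I_(2 * m).+1 * 'I_(2 * m).+1)%type.

Definition config (m : nat) : finType := {ffun box m -> bool}.
Definition lconf (r : nat) : finType := {ffun box r -> bool}.

(* Reading a configuration at integer coordinates, with fixed boundary
   condition: cells outside W are in the fixed state b. *)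
Definition readc (m : nat) (b : bool) (X : config m) (x y : int) : bool :=
  if [&& (0 <= x)%R, (x < ((2 * m).+1)%:Z)%R, (0 <= y)%R & (y < ((2 * m).+1)%:Z)%R]
  then X (inord `|x|%N, inord `|y|%N) else b.

(* 1-layered FDCA with working zone [2m+1]^2: its unique layer has basic
   neighborhood [-m,m]^2, so that the central cell c satisfies c + N_1 = W;
   the local configuration at c is then exactly the input configuration. *)
Record FDCA1 (m : nat) := { top1 : lconf m -> bool }.

Definition out1 m (A : FDCA1 m) (X : config m) : bool := top1 A X.

(* 2-layered FDCA with working zone [2m+1]^2: layer 1 has radius r1,
   boundary state bnd and local map f1; layer 2 has radius m (so that the
   central cell c satisfies c + N_2 = W) and local map f2. *)
Record FDCA2 (m : nat) := {
  r1 : nat;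
  bnd : bool;
  f1 : lconf r1 -> bool;
  f2 : lconf m -> bool }.

Definition layer1 m (A : FDCA2 m) (X : config m) : config m :=
  [ffun c : box m =>
     @f1 m A [ffun z : box (r1 A) =>
             @readc m (bnd A) X ((c.1 : nat)%:Z + (z.1 : nat)%:Z - (r1 A)%:Z)%R
                             ((c.2 : nat)%:Z + (z.2 : nat)%:Z - (r1 A)%:Z)%R]].

(* state of the distinguished layer-2 cell (its local configuration is the
   whole layer-1 configuration on W) *)
Definition out2 m (A : FDCA2 m) (X : config m) : bool := @f2 m A (layer1 A X).

Definition recognizes m (out : config m -> bool) (D : {set config m}) : Prop :=
  exists k : bool, forall X : config m, (out X == k) = (X \in D).

Definition zone_size (m : nat) : nat := ((2 * m).+1 ^ 2)%N.
Definition P2 m (A : FDCA2 m) : nat := #|[set y : lconf m | @f2 m A y]|.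
Definition p1 m (A : FDCA2 m) : nat := #|[set x : lconf (r1 A) | @f1 m A x]|.
Definition n1 m (A : FDCA2 m) : nat := ((2 * r1 A).+1 ^ 2)%N.

Definition cell_complexity (R : realType) (L : nat -> nat -> R) : Prop :=
  [/\ forall y z : nat, (0 < y)%N -> (0 < z)%N -> (0 < L y z)%R,
      forall y y' z : nat, (0 < y)%N -> (y <= y')%N -> (0 < z)%N -> (L y z <= L y' z)%R
    & forall y z z' : nat, (0 < y)%N -> (0 < z)%N -> (z <= z')%N -> (L y z <= L y z')%R].

Definition lambda1 (R : realType) (L : nat -> nat -> R) m (D : {set config m}) : R :=
  L (zone_size m) #|D|.
Definition lambda2 (R : realType) (L : nat -> nat -> R) m (A : FDCA2 m) : R :=
  ((zone_size m)%:R * L (n1 A) (p1 A) + L (zone_size m) (P2 A))%R.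

From HB Require Import structures.
From mathcomp Require Import all_boot all_order all_algebra.
From mathcomp Require Import all_classical all_reals all_analysis.
Import Order.TTheory GRing.Theory Num.Theory numFieldNormedType.Exports.
Local Open Scope classical_set_scope.
Local Open Scope ring_scope.

(* The ratio lambda2 / lambda1 is the sum of the two ratios of (C2) and (C1),
   both nonnegative since L is positive, and a sum of nonnegative terms tends
   to 0 iff each term does. *)

Lemma cvg_nonnegD0 {R : realType} {T : Type} {F : set_system T}
    {FF : ProperFilter F} {u v : T -> R} :
  (forall t, 0 <= u t) -> (forall t, 0 <= v t) ->
  (u \+ v @ F --> 0) <-> (u @ F --> 0 /\ v @ F --> 0).
Proof.
move=> u_ge0 v_ge0; split=> [uv0|[u0 v0]]; last by rewrite -[0]addr0; exact: cvgD.
split; apply: (squeeze_cvgr _ (cvg_cst 0) uv0); apply: filterE => t /=.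
- by rewrite u_ge0 lerDl v_ge0.
- by rewrite v_ge0 lerDr u_ge0.
Qed.

Lemma lambda_ratioE {R : realType} (L : nat -> nat -> R) {m : nat}
    (A : FDCA2 m) (D : {set config m}) :
  lambda2 L A / lambda1 L D =
  (zone_size m)%:R * L (n1 A) (p1 A) / L (zone_size m) #|D|
  + L (zone_size m) (P2 A) / L (zone_size m) #|D|.
Proof. by rewrite /lambda2 /lambda1 mulrDl. Qed.

Theorem theorem8 (R : realType) (L : nat -> nat -> R)
    (hL : cell_complexity L)
    (A1 : forall m : nat, FDCA1 m) (A2 : forall m : nat, FDCA2 m)
    (D : forall m : nat, {set config m})
    (hrec1 : forall m, recognizes (@out1 m (A1 m)) (D m))
    (hrec2 : forall m, recognizes (@out2 m (A2 m)) (D m))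
    (hnontriv : forall m, D m != finset.set0 /\ D m != finset.setTfor (config m))
    (hP1 : forall m, (0 < #|D m|)%N)
    (hP2 : forall m, (0 < P2 (A2 m))%N)
    (hp : forall m, (0 < p1 (A2 m))%N) :
  (fun m : nat => lambda2 L (A2 m) / lambda1 L (D m)) @ \oo --> (0 : R)
  <->
  ((fun m : nat => L (zone_size m) (P2 (A2 m)) / L (zone_size m) #|D m|) @ \oo --> (0 : R)
   /\ (fun m : nat => (zone_size m)%:R * L (n1 (A2 m)) (p1 (A2 m)) / L (zone_size m) #|D m|)
        @ \oo --> (0 : R)).
Proof.
case: hL => L_gt0 _ _.
have N_gt0 m : (0 < zone_size m)%N by rewrite expn_gt0.
have n_gt0 m : (0 < n1 (A2 m))%N by rewrite expn_gt0.
have C1_ge0 m : 0 <= L (zone_size m) (P2 (A2 m)) / L (zone_size m) #|D m|.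
  by rewrite divr_ge0 ?ltW ?L_gt0.
have C2_ge0 m :
    0 <= (zone_size m)%:R * L (n1 (A2 m)) (p1 (A2 m)) / L (zone_size m) #|D m|.
  by rewrite divr_ge0 ?mulr_ge0 ?ltW ?L_gt0.
rewrite (funext (fun m => lambda_ratioE L (A2 m) (D m))).
apply: iff_trans (cvg_nonnegD0 (F := \oo) C2_ge0 C1_ge0) _.
by split=> -[].
Qed.
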